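(* Let $N\in\mathbb N$ be fixed. There exist constants $C,\alpha>0$ such that for every $T>0$ and every two solutions $u_1(t),u_2(t)$, $t\in[-T,0]$, of (E) with $u_1(t)-u_2(t)\in K^+$ for all $t\in[-T,0]$, one has $\|u_1(-T)-u_2(-T)\|^2_{H^{-1}}\le Ce^{\alpha T}\|P_Nu_1(0)-P_Nu_2(0)\|^2_{H^{-1}}.$
   Context: Let $H$ be a real separable Hilbert space with inner product $(\cdot,\cdot)$ and norm $\|\cdot\|_H$, and let $A:D(A)\to H$ be a linear self-adjoint positive operator with compact inverse, with orthonormal eigenbasis $\{e_n\}$, $Ae_n=\lambda_ne_n$, $0<\lambda_1\le\lambda_2\le\dots\to\infty$. For $s\ge0$, $H^s=D(A^{s/2})$ with $\|u\|_{H^s}^2=\sum_n\lambda_n^s|(u,e_n)|^2$; for $s<0$, $H^s$ is the completion of $H$ in this norm. $P_Nu=\sum_{n\le N}(u,e_n)e_n$, $Q_N=\mathrm{Id}-P_N$. $F:H\to H$ is globally bounded and globally Lipschitz with constant $L$. (E) is $\partial_tu+A^2u+AF(u)=0$. $V(\xi)=\|Q_N\xi\|^2_{H^{-1}}-\|P_N\xi\|^2_{H^{-1}}$, $K^+=\{\xi\in H^{-1}:V(\xi)\le0\}$. The constants $C,\alpha$ may depend on $N$, $A$, $L$ but not on $u_1,u_2,T$. *)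

From Stdlib Require Import Reals Lra List ClassicalEpsilon.
Open Scope R_scope.

Record HSpace := {
  hcar :> Type;
  hzero : hcar;
  hadd : hcar -> hcar -> hcar;
  hopp : hcar -> hcar;
  hscal : R -> hcar -> hcar;
  hip : hcar -> hcar -> R;
  hadd_assoc : forall x y z, hadd x (hadd y z) = hadd (hadd x y) z;
  hadd_comm : forall x y, hadd x y = hadd y x;
  hadd_zero : forall x, hadd x hzero = x;
  hadd_opp : forall x, hadd x (hopp x) = hzero;
  hscal_one : forall x, hscal 1 x = x;
  hscal_assoc : forall a b x, hscal a (hscal b x) = hscal (a * b) x;
  hscal_addv : forall a x y, hscal a (hadd x y) = hadd (hscal a x) (hscal a y);
  hscal_adds : forall a b x, hscal (a + b) x = hadd (hscal a x) (hscal b x);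
  hip_sym : forall x y, hip x y = hip y x;
  hip_add : forall x y z, hip (hadd x y) z = hip x z + hip y z;
  hip_scal : forall a x y, hip (hscal a x) y = a * hip x y;
  hip_pos : forall x, 0 <= hip x x;
  hip_def : forall x, hip x x = 0 -> x = hzero;
  hcomplete : forall s : nat -> hcar,
    (forall eps, eps > 0 -> exists N, forall m n, (m >= N)%nat -> (n >= N)%nat ->
        sqrt (hip (hadd (s m) (hopp (s n))) (hadd (s m) (hopp (s n)))) < eps) ->
    exists l, forall eps, eps > 0 -> exists N, forall n, (n >= N)%nat ->
        sqrt (hip (hadd (s n) (hopp l)) (hadd (s n) (hopp l))) < eps
}.

Arguments hzero {h}.
Arguments hadd {h}.
Arguments hopp {h}.
Arguments hscal {h}.
Arguments hip {h}.

Definition hsub {H : HSpace} (x y : H) : H := hadd x (hopp y).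
Definition hnorm {H : HSpace} (x : H) : R := sqrt (hip x x).

(** Value of a convergent series sum_{n>=0} f n (chosen by classical
    description; meaningful whenever the series converges). *)
Definition series (f : nat -> R) : R :=
  epsilon (inhabits 0) (fun l => infinite_sum f l).

(** (e, lam): orthonormal eigenbasis e_n of A, with A e_n = lam_n e_n,
    0 < lam_0 <= lam_1 <= ... -> +infinity.  (Indices start at 0.) *)
Definition orthonormal_basis {H : HSpace} (e : nat -> H) : Prop :=
  (forall i j, hip (e i) (e j) = if Nat.eqb i j then 1 else 0) /\
  (forall u : H, infinite_sum (fun n => (hip u (e n)) ^ 2) (hip u u)).

Definition eigenvalue_seq (lam : nat -> R) : Prop :=
  (forall n, 0 < lam n) /\ (forall n, lam n <= lam (S n)) /\
  (forall M, exists n0, forall n, (n >= n0)%nat -> M < lam n).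

Definition hm1sq {H : HSpace} (e : nat -> H) (lam : nat -> R) (u : H) : R :=
  series (fun n => (hip u (e n)) ^ 2 / lam n).

(** P_N u = sum_{n <= N} (u,e_n) e_n  (1-based in the paper; here the
    first N basis vectors e_0, ..., e_{N-1}). *)
Definition PN {H : HSpace} (e : nat -> H) (N : nat) (u : H) : H :=
  fold_right (fun n acc => hadd (hscal (hip u (e n)) (e n)) acc) hzero (seq 0 N).

Definition QN {H : HSpace} (e : nat -> H) (N : nat) (u : H) : H :=
  hsub u (PN e N u).

Definition Vfun {H : HSpace} (e : nat -> H) (lam : nat -> R) (N : nat) (xi : H) : R :=
  hm1sq e lam (QN e N xi) - hm1sq e lam (PN e N xi).

Definition in_Kplus {H : HSpace} (e : nat -> H) (lam : nat -> R) (N : nat) (xi : H) : Prop :=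
  Vfun e lam N xi <= 0.

Definition globally_bounded {H : HSpace} (F : H -> H) : Prop :=
  exists M, forall u, hnorm (F u) <= M.

Definition lipschitz_with {H : HSpace} (F : H -> H) (L : R) : Prop :=
  forall u v, hnorm (hsub (F u) (F v)) <= L * hnorm (hsub u v).

(** u is a solution of (E): d/dt u + A^2 u + A F(u) = 0 on [-T,0]:
    u is continuous [-T,0] -> H and the equation holds in each coordinate
    (weak/Galerkin form): d/dt (u,e_n) = -lam_n^2 (u,e_n) - lam_n (F(u),e_n)
    on (-T,0). *)
Definition is_solution {H : HSpace} (e : nat -> H) (lam : nat -> R) (F : H -> H)
    (T : R) (u : R -> H) : Prop :=
  (forall t, -T <= t <= 0 -> forall eps, eps > 0 -> exists delta, delta > 0 /\
      forall s, -T <= s <= 0 -> Rabs (s - t) < delta -> hnorm (hsub (u s) (u t)) < eps) /\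
  (forall n t, -T < t < 0 ->
      derivable_pt_lim (fun s => hip (u s) (e n)) t
        (- (lam n) ^ 2 * hip (u t) (e n) - lam n * hip (F (u t)) (e n))).

(* Let w = u1 - u2 with coordinates w_n = (w, e_n), so that
   w_n' = -lam_n^2 w_n - lam_n g_n with sum g_n^2 <= L^2 |w|^2 (g_n the coordinates of
   F(u1) - F(u2)).  In the cone K^+ the Q_N part of w is dominated by its P_N part, so the
   Lyapunov function Phi = 2 |P_N w|^2 - |Q_N w|^2 (norms in H^{-1}) lies between
   |P_N w|^2 and 2 |P_N w|^2, and the coordinate equations give Phi' >= -c Phi.  Hence
   Phi(-T) <= e^{cT} Phi(0), and |w(-T)|^2 <= 2 |P_N w(-T)|^2 <= 4 e^{cT} |P_N w(0)|^2.
   To avoid differentiating series, Phi is truncated to finitely many modes; the error is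
   the Parseval tail of |w|^2, which tends to 0 uniformly on [-T, 0] by Dini's theorem. *)

From Stdlib Require Import Reals Lra Lia Psatz List ClassicalEpsilon.
From Coquelicot Require Continuity Derive.
Open Scope R_scope.

Section InnerProduct.
Context {H : HSpace}.
Implicit Types x y z : H.

Lemma hip_zero_l z : hip (@hzero H) z = 0.
Proof. pose proof (hip_add H hzero hzero z) as E. rewrite hadd_zero in E. lra. Qed.

Lemma hip_zero_r z : hip z (@hzero H) = 0.
Proof. rewrite hip_sym. apply hip_zero_l. Qed.

Lemma hip_opp_l y z : hip (hopp y) z = - hip y z.
Proof.
  pose proof (hip_add H y (hopp y) z) as E. rewrite hadd_opp, hip_zero_l in E. lra.
Qed.

Lemma hip_sub_l x y z : hip (hsub x y) z = hip x z - hip y z.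
Proof. unfold hsub. rewrite hip_add, hip_opp_l. ring. Qed.

Lemma hip_sub_r x y z : hip z (hsub x y) = hip z x - hip z y.
Proof. rewrite hip_sym, hip_sub_l, (hip_sym _ x), (hip_sym _ y). ring. Qed.

Lemma hip_add_r x y z : hip z (hadd x y) = hip z x + hip z y.
Proof. rewrite hip_sym, hip_add, (hip_sym _ x), (hip_sym _ y). ring. Qed.

Lemma hip_scal_r a x y : hip y (hscal a x) = a * hip y x.
Proof. rewrite hip_sym, hip_scal, hip_sym. ring. Qed.

Lemma hip_sq_le x y : hip x y ^ 2 <= hip x x * hip y y.
Proof.
  destruct (Req_dec (hip y y) 0) as [Hy0 | Hy0].
  - apply hip_def in Hy0. subst y. rewrite !hip_zero_r. pose proof (hip_pos H x). nra.
  - assert (Hy : 0 < hip y y) by (pose proof (hip_pos H y); lra).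
    (* expand [0 <= |x + t y|^2] at the minimising [t] *)
    set (t := - hip x y / hip y y).
    pose proof (hip_pos H (hadd x (hscal t y))) as P.
    rewrite hip_add, !hip_add_r, !hip_scal, !hip_scal_r, (hip_sym _ y x) in P.
    assert (E : hip x x * hip y y - hip x y ^ 2 =
      hip y y * (hip x x + t * hip x y + (t * hip x y + t * (t * hip y y)))).
    { unfold t. field. lra. }
    nra.
Qed.

Lemma hnorm_nonneg x : 0 <= hnorm x.
Proof. apply sqrt_pos. Qed.

Lemma hnorm_sq x : hnorm x * hnorm x = hip x x.
Proof. apply sqrt_sqrt, hip_pos. Qed.

Lemma Rabs_hip_le x y : Rabs (hip x y) <= hnorm x * hnorm y.
Proof.
  apply Rsqr_incr_0_var; [| apply Rmult_le_pos; apply hnorm_nonneg].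
  rewrite <- Rsqr_abs, Rsqr_mult. unfold Rsqr. rewrite !hnorm_sq.
  pose proof (hip_sq_le x y). nra.
Qed.

Lemma hnorm_hsub_le x y : hnorm (hsub x y) <= hnorm x + hnorm y.
Proof.
  apply Rsqr_incr_0_var; [| pose proof (hnorm_nonneg x); pose proof (hnorm_nonneg y); lra].
  unfold Rsqr. rewrite hnorm_sq, hip_sub_l, !hip_sub_r, (hip_sym _ y x).
  pose proof (hnorm_sq x). pose proof (hnorm_sq y).
  pose proof (Rabs_hip_le x y) as CS.
  assert (- hip x y <= Rabs (hip x y)) by (rewrite <- Rabs_Ropp; apply Rle_abs).
  nra.
Qed.

End InnerProduct.

Fixpoint psum (f : nat -> R) (M : nat) : R :=
  match M with O => 0 | S k => psum f k + f k end.

Lemma psum_ext f g M : (forall n, (n < M)%nat -> f n = g n) -> psum f M = psum g M.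
Proof.
  induction M as [|M IH]; intros Hfg; simpl; [reflexivity|].
  rewrite IH, Hfg; auto with arith.
Qed.

Lemma psum_le f g M : (forall n, (n < M)%nat -> f n <= g n) -> psum f M <= psum g M.
Proof.
  induction M as [|M IH]; intros Hfg; simpl; [lra|].
  apply Rplus_le_compat; auto with arith.
Qed.

Lemma psum_plus f g M : psum (fun n => f n + g n) M = psum f M + psum g M.
Proof. induction M as [|M IH]; simpl; [lra|]. rewrite IH. ring. Qed.

Lemma psum_scal a f M : psum (fun n => a * f n) M = a * psum f M.
Proof. induction M as [|M IH]; simpl; [lra|]. rewrite IH. ring. Qed.

Lemma psum_nonneg f M : (forall n, 0 <= f n) -> 0 <= psum f M.
Proof. intros Hf. induction M as [|M IH]; simpl; [lra|]. specialize (Hf M). lra. Qed.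

Lemma psum_mono f M M' : (forall n, 0 <= f n) -> (M <= M')%nat -> psum f M <= psum f M'.
Proof. intros Hf Hle. induction Hle; simpl; [lra|]. specialize (Hf m). lra. Qed.

Lemma psum_stable f N M :
  (forall n, (N <= n)%nat -> f n = 0) -> (N <= M)%nat -> psum f M = psum f N.
Proof. intros Hf Hle. induction Hle; simpl; auto. rewrite Hf by lia. lra. Qed.

Lemma psum_indicator f N M : (N <= M)%nat ->
  psum (fun n => if (n <? N)%nat then f n else 0) M = psum f N.
Proof.
  intros Hle. rewrite (psum_stable _ N M); auto.
  - apply psum_ext. intros n Hn. destruct (Nat.ltb_spec n N); lia || reflexivity.
  - intros n Hn. destruct (Nat.ltb_spec n N); lia || reflexivity.
Qed.

Lemma psum_split_at f N M : (N <= M)%nat ->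
  psum f M = psum f N + psum (fun n => if (n <? N)%nat then 0 else f n) M.
Proof.
  intros Hle. rewrite <- (psum_indicator f N M Hle), <- psum_plus.
  apply psum_ext. intros n _. destruct (n <? N)%nat; ring.
Qed.

Lemma sum_f_R0_psum f n : sum_f_R0 f n = psum f (S n).
Proof. induction n as [|n IH]; simpl; [lra|]. rewrite IH. reflexivity. Qed.

Lemma psum_growing f : (forall n, 0 <= f n) -> Un_growing (sum_f_R0 f).
Proof. intros Hf n. rewrite !sum_f_R0_psum. simpl. specialize (Hf (S n)). lra. Qed.

Lemma psum_le_infinite_sum f l M :
  (forall n, 0 <= f n) -> infinite_sum f l -> psum f M <= l.
Proof.
  intros Hf Hl. destruct M as [|M].
  - pose proof (growing_ineq _ _ (psum_growing f Hf) Hl 0) as P. simpl in *.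
    specialize (Hf 0%nat). lra.
  - rewrite <- sum_f_R0_psum. exact (growing_ineq _ _ (psum_growing f Hf) Hl M).
Qed.

Lemma series_eq f l : infinite_sum f l -> series f = l.
Proof.
  intros Hl. apply (uniqueness_sum f); [| exact Hl].
  apply (epsilon_spec (inhabits 0) (fun l => infinite_sum f l)). exists l. exact Hl.
Qed.

Lemma series_bounded f B : (forall n, 0 <= f n) -> (forall M, psum f M <= B) ->
  (forall M, psum f M <= series f) /\ series f <= B.
Proof.
  intros Hf HB.
  destruct (growing_cv (sum_f_R0 f) (psum_growing f Hf)) as [l Hl].
  { exists B. intros x [n ->]. rewrite sum_f_R0_psum. apply HB. }
  rewrite (series_eq f l Hl). split.
  - intros M. exact (psum_le_infinite_sum f l M Hf Hl).
  - apply Rnot_lt_le. intros HBl.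
    destruct (Hl (l - B)) as [n Hn]; [lra|]. specialize (Hn n (le_n _)).
    unfold Rdist in Hn. apply Rabs_def2 in Hn.
    rewrite sum_f_R0_psum in Hn. specialize (HB (S n)). lra.
Qed.

Definition hm1_low (lam : nat -> R) (N : nat) (w : nat -> R) : R :=
  psum (fun n => w n ^ 2 / lam n) N.

Definition hm1_high (lam : nat -> R) (N : nat) (w : nat -> R) (M : nat) : R :=
  psum (fun n => if (n <? N)%nat then 0 else w n ^ 2 / lam n) M.

Lemma sq_div_nonneg x l : 0 < l -> 0 <= x ^ 2 / l.
Proof. intros Hl. apply Rle_mult_inv_pos; [apply pow2_ge_0 | exact Hl]. Qed.

Lemma hm1_high_nonneg lam N w M : (forall n, 0 < lam n) -> 0 <= hm1_high lam N w M.
Proof.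
  intros Hl. apply psum_nonneg. intros n.
  destruct (n <? N)%nat; [lra | apply sq_div_nonneg, Hl].
Qed.

Lemma lam_le_of_le lam : eigenvalue_seq lam -> forall n m, (n <= m)%nat -> lam n <= lam m.
Proof. intros [_ [Hm _]] n m Hnm. induction Hnm; [lra|]. specialize (Hm m). lra. Qed.

Section Coordinates.
Context {H : HSpace} (e : nat -> H) (lam : nat -> R).
Hypothesis Ho : orthonormal_basis e.
Hypothesis Hl : eigenvalue_seq lam.

Lemma lam_pos n : 0 < lam n.
Proof. destruct Hl as [P _]. apply P. Qed.

Lemma bessel (z : H) M : psum (fun n => hip z (e n) ^ 2) M <= hip z z.
Proof.
  destruct Ho as [_ Hp]. apply psum_le_infinite_sum; [intros; apply pow2_ge_0 | apply Hp].
Qed.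

Lemma coord_fold_right (x : H) n len a :
  hip (fold_right (fun k acc => hadd (hscal (hip x (e k)) (e k)) acc) hzero (seq a len)) (e n)
  = if (Nat.leb a n && Nat.ltb n (a + len))%bool then hip x (e n) else 0.
Proof.
  destruct Ho as [Hon _]. revert a. induction len as [|len IH]; intros a; simpl.
  - rewrite hip_zero_l.
    destruct (Nat.leb_spec a n), (Nat.ltb_spec n (a + 0)); simpl; lia || reflexivity.
  - rewrite hip_add, hip_scal, Hon, IH.
    destruct (Nat.eqb_spec a n) as [<- | Han].
    + destruct (Nat.leb_spec (S a) a), (Nat.leb_spec a a), (Nat.ltb_spec a (a + S len));
        simpl; lia || ring.
    + destruct (Nat.leb_spec (S a) n), (Nat.ltb_spec n (S a + len)),
        (Nat.leb_spec a n), (Nat.ltb_spec n (a + S len)); simpl; lia || ring.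
Qed.

Lemma PN_coord N (x : H) n :
  hip (PN e N x) (e n) = if (n <? N)%nat then hip x (e n) else 0.
Proof. unfold PN. rewrite coord_fold_right. reflexivity. Qed.

Lemma QN_coord N (x : H) n :
  hip (QN e N x) (e n) = if (n <? N)%nat then 0 else hip x (e n).
Proof. unfold QN. rewrite hip_sub_l, PN_coord. destruct (n <? N)%nat; ring. Qed.

Lemma psum_le_hm1sq (z : H) M :
  psum (fun n => hip z (e n) ^ 2 / lam n) M <= hm1sq e lam z.
Proof.
  assert (Hl0 : 0 < lam 0%nat) by apply lam_pos.
  apply (series_bounded _ (hip z z / lam 0%nat)).
  - intros n. apply sq_div_nonneg, lam_pos.
  - intros M'.
    apply Rle_trans with (psum (fun n => / lam 0%nat * hip z (e n) ^ 2) M').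
    + apply psum_le. intros n _. unfold Rdiv. rewrite Rmult_comm.
      apply Rmult_le_compat_r; [apply pow2_ge_0 |].
      apply Rinv_le_contravar; [exact Hl0 | apply lam_le_of_le; auto; lia].
    + rewrite psum_scal. unfold Rdiv. rewrite (Rmult_comm (hip z z)).
      apply Rmult_le_compat_l; [left; apply Rinv_0_lt_compat, Hl0 | apply bessel].
Qed.

Lemma hm1sq_finite N (z : H) : (forall n, (N <= n)%nat -> hip z (e n) = 0) ->
  hm1sq e lam z = hm1_low lam N (fun n => hip z (e n)).
Proof.
  intros Hz. apply Rle_antisym; [| apply psum_le_hm1sq].
  apply (series_bounded _ (hm1_low lam N (fun n => hip z (e n)))).
  - intros n. apply sq_div_nonneg, lam_pos.
  - intros M. apply Rle_trans with (psum (fun n => hip z (e n) ^ 2 / lam n) (Nat.max M N)).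
    + apply psum_mono; [intros n; apply sq_div_nonneg, lam_pos | lia].
    + right. apply psum_stable; [| lia]. intros n Hn. rewrite Hz by exact Hn.
      unfold Rdiv. ring.
Qed.

Lemma hm1sq_PN N (z : H) : hm1sq e lam (PN e N z) = hm1_low lam N (fun n => hip z (e n)).
Proof.
  rewrite (hm1sq_finite N).
  - apply psum_ext. intros n Hn. rewrite PN_coord.
    destruct (Nat.ltb_spec n N); [reflexivity | lia].
  - intros n Hn. rewrite PN_coord. destruct (Nat.ltb_spec n N); [lia | reflexivity].
Qed.

Lemma hm1sq_sub_PN N (x y : H) :
  hm1sq e lam (hsub (PN e N x) (PN e N y)) = hm1_low lam N (fun n => hip (hsub x y) (e n)).
Proof.
  rewrite (hm1sq_finite N).
  - apply psum_ext. intros n Hn. rewrite !hip_sub_l, !PN_coord.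
    destruct (Nat.ltb_spec n N); [reflexivity | lia].
  - intros n Hn. rewrite hip_sub_l, !PN_coord. destruct (Nat.ltb_spec n N); [lia | ring].
Qed.

Lemma in_Kplus_high_le_low N (z : H) M : in_Kplus e lam N z ->
  hm1_high lam N (fun n => hip z (e n)) M <= hm1_low lam N (fun n => hip z (e n)).
Proof.
  unfold in_Kplus, Vfun. rewrite hm1sq_PN. intros Hk.
  pose proof (psum_le_hm1sq (QN e N z) M) as P.
  unfold hm1_high. rewrite (psum_ext _ (fun n => hip (QN e N z) (e n) ^ 2 / lam n)); [lra |].
  intros n _. rewrite QN_coord. destruct (n <? N)%nat; [unfold Rdiv; ring | reflexivity].
Qed.

Lemma hm1sq_le_of_in_Kplus N (z : H) : in_Kplus e lam N z ->
  hm1sq e lam z <= 2 * hm1_low lam N (fun n => hip z (e n)).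
Proof.
  intros Hk. apply (series_bounded _ _ (fun n => sq_div_nonneg _ _ (lam_pos n))).
  intros M. apply Rle_trans with (psum (fun n => hip z (e n) ^ 2 / lam n) (Nat.max M N)).
  { apply psum_mono; [intros n; apply sq_div_nonneg, lam_pos | lia]. }
  pose proof (in_Kplus_high_le_low N z (Nat.max M N) Hk) as Hhl.
  unfold hm1_high, hm1_low in *. rewrite (psum_split_at _ N) by lia. lra.
Qed.

End Coordinates.

Lemma continuity_pt_of_eps_delta f x :
  (forall eps, 0 < eps -> exists d, 0 < d /\
     forall y, Rabs (y - x) < d -> Rabs (f y - f x) < eps) ->
  continuity_pt f x.
Proof.
  intros Hc eps Heps. destruct (Hc eps Heps) as [d [Hd Hy]].
  exists d. split; [exact Hd |]. intros y [_ Hyx]. apply Hy, Hyx.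
Qed.

Lemma continuity_pt_eps_delta f x : continuity_pt f x ->
  forall eps, 0 < eps -> exists d, 0 < d /\
    forall y, Rabs (y - x) < d -> Rabs (f y - f x) < eps.
Proof.
  intros Hc eps Heps. destruct (Hc eps Heps) as [d [Hd Hy]].
  exists d. split; [exact Hd |]. intros y Hyx.
  destruct (Req_dec y x) as [-> | Hne].
  - rewrite Rminus_diag, Rabs_R0. exact Heps.
  - apply (Hy y). split; [split; [exact I | auto] | exact Hyx].
Qed.

(* Projection onto [a, b]: a function on [a, b] that is continuous within [a, b]
   becomes, composed with [clamp a b], continuous on the whole line, so the
   two-sided [continuity_pt] calculus applies to it. *)
Definition clamp (a b s : R) : R := Rmax a (Rmin b s).

Lemma clamp_id a b s : a <= s <= b -> clamp a b s = s.
Proof. intros. unfold clamp, Rmax, Rmin. repeat destruct Rle_dec; lra. Qed.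

Lemma clamp_in a b s : a <= b -> a <= clamp a b s <= b.
Proof. intros. unfold clamp, Rmax, Rmin. repeat destruct Rle_dec; lra. Qed.

Lemma clamp_lipschitz a b x y : a <= b -> Rabs (clamp a b y - clamp a b x) <= Rabs (y - x).
Proof.
  intros. unfold clamp, Rmax, Rmin.
  repeat destruct Rle_dec; unfold Rabs; repeat destruct Rcase_abs; lra.
Qed.

Lemma continuity_pt_clamp a b x : a <= b -> continuity_pt (clamp a b) x.
Proof.
  intros Hab. apply continuity_pt_of_eps_delta. intros eps Heps.
  exists eps. split; [exact Heps |]. intros y Hy.
  eapply Rle_lt_trans; [apply clamp_lipschitz |]; assumption.
Qed.

Lemma derivable_pt_lim_clamp a b f t l : a < t < b -> derivable_pt_lim f t l ->
  derivable_pt_lim (fun s => f (clamp a b s)) t l.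
Proof.
  intros Ht Hf eps Heps. destruct (Hf eps Heps) as [d Hd].
  assert (Hp : 0 < Rmin d (Rmin (t - a) (b - t))) by
    (apply Rmin_pos; [apply cond_pos | apply Rmin_pos; lra]).
  exists (mkposreal _ Hp). intros h Hh Hhd. simpl in Hhd.
  assert (Hh1 : Rabs h < d) by (eapply Rlt_le_trans; [exact Hhd | apply Rmin_l]).
  assert (Hh2 : Rabs h < Rmin (t - a) (b - t)) by (eapply Rlt_le_trans; [exact Hhd | apply Rmin_r]).
  pose proof (Rmin_l (t - a) (b - t)). pose proof (Rmin_r (t - a) (b - t)).
  apply Rabs_def2 in Hh2.
  rewrite (clamp_id a b (t + h)), (clamp_id a b t) by lra. apply Hd; assumption.
Qed.

Lemma le_of_derive_nonneg a b f df : a < b ->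
  (forall x, continuity_pt (fun s => f (clamp a b s)) x) ->
  (forall t, a < t < b -> derivable_pt_lim f t (df t)) ->
  (forall t, a <= t <= b -> 0 <= df t) -> f a <= f b.
Proof.
  intros Hab Hc Hd Hpos.
  destruct (Derive.MVT_gen (fun s => f (clamp a b s)) a b df) as [c [Hc1 Hc2]].
  - intros x Hx. rewrite Rmin_left, Rmax_right in Hx by lra.
    apply Derive.is_derive_Reals, derivable_pt_lim_clamp; auto.
  - intros x _. apply Hc.
  - rewrite Rmin_left, Rmax_right in Hc1 by lra.
    rewrite !clamp_id in Hc2 by lra.
    pose proof (Hpos c Hc1). nra.
Qed.

Lemma backward_gronwall a b f df r k : a < b -> 0 <= r -> 0 <= k ->
  (forall x, continuity_pt (fun s => f (clamp a b s)) x) ->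
  (forall t, a < t < b -> derivable_pt_lim f t (df t)) ->
  (forall t, a <= t <= b -> - r * f t - k <= df t) ->
  f a <= exp (r * (b - a)) * (f b + k * (b - a)).
Proof.
  intros Hab Hr Hk Hc Hd Hdf.
  (* [s |-> exp (r (s - b)) f s + k s] is nondecreasing on [a, b] *)
  set (g := fun s => exp (r * (s - b)) * f s + k * s).
  assert (Hg : g a <= g b).
  { apply (le_of_derive_nonneg a b g (fun s => exp (r * (s - b)) * (r * f s + df s) + k)).
    - exact Hab.
    - intros x. unfold g.
      apply (Continuity.continuity_pt_ext
        (plus_fct (mult_fct (comp exp (fun s => r * (clamp a b s - b))) (fun s => f (clamp a b s)))
                  (mult_real_fct k (clamp a b)))); [reflexivity |].
      apply continuity_pt_plus; [apply continuity_pt_mult; [| apply Hc] |].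
      + apply continuity_pt_comp; [| apply derivable_continuous_pt, derivable_pt_exp].
        apply (Continuity.continuity_pt_ext (mult_real_fct r (minus_fct (clamp a b) (fct_cte b))));
          [reflexivity |].
        apply continuity_pt_scal, continuity_pt_minus;
          [apply continuity_pt_clamp; lra | apply continuity_pt_const; intros ? ?; reflexivity].
      + apply continuity_pt_scal, continuity_pt_clamp. lra.
    - intros t Ht.
      set (h := mult_real_fct r (minus_fct id (fct_cte b))).
      assert (Dh : derivable_pt_lim h t (r * (1 - 0))).
      { apply derivable_pt_lim_scal, derivable_pt_lim_minus;
          [apply derivable_pt_lim_id | apply derivable_pt_lim_const]. }
      pose proof (derivable_pt_lim_comp h exp t _ _ Dh (derivable_pt_lim_exp (h t))) as Dexp.
      pose proof (derivable_pt_lim_plus _ _ t _ _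
        (derivable_pt_lim_mult _ _ t _ _ Dexp (Hd t Ht))
        (derivable_pt_lim_scal id k t 1 (derivable_pt_lim_id t))) as Dg.
      unfold h, comp, mult_real_fct, minus_fct, id, fct_cte in Dg.
      apply (derivable_pt_lim_ext _ g) in Dg; [| intros s; reflexivity].
      replace (exp (r * (t - b)) * (r * f t + df t) + k) with
        (exp (r * (t - b)) * (r * (1 - 0)) * f t + exp (r * (t - b)) * df t + k * 1) by ring.
      exact Dg.
    - intros t Ht. specialize (Hdf t Ht).
      assert (Hexp : exp (r * (t - b)) <= 1).
      { rewrite <- exp_0. assert (Hneg : r * (t - b) <= 0) by nra.
        destruct (Rle_lt_or_eq_dec _ _ Hneg) as [Hlt | ->];
          [left; apply exp_increasing, Hlt | apply Rle_refl]. }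
      pose proof (exp_pos (r * (t - b))). nra. }
  unfold g in Hg. rewrite Rminus_diag, Rmult_0_r, exp_0, Rmult_1_l in Hg.
  assert (Hinv : exp (r * (b - a)) * exp (r * (a - b)) = 1).
  { rewrite <- exp_plus. replace (r * (b - a) + r * (a - b)) with 0 by ring. apply exp_0. }
  pose proof (exp_pos (r * (b - a))).
  replace (f a) with (exp (r * (b - a)) * (exp (r * (a - b)) * f a))
    by (rewrite <- Rmult_assoc, Hinv; ring).
  apply Rmult_le_compat_l; lra.
Qed.

Lemma dini (f : nat -> R -> R) a b : a <= b ->
  (forall M M' t, (M <= M')%nat -> a <= t <= b -> f M' t <= f M t) ->
  (forall t, a <= t <= b -> forall eps, 0 < eps -> exists M, f M t < eps) ->
  (forall M x, continuity_pt (fun s => f M (clamp a b s)) x) ->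
  forall eps, 0 < eps -> exists M, forall t, a <= t <= b -> f M t < eps.
Proof.
  intros Hab Hmon Hpt Hc eps Heps.
  (* [s] := sup of the [x] for which one [M] works on [a, x]; continuity at [s] forces [s = b] *)
  set (E := fun x => a <= x <= b /\ exists M, forall t, a <= t <= x -> f M t < eps).
  assert (Ea : E a).
  { split; [lra |]. destruct (Hpt a (conj (Rle_refl a) Hab) eps Heps) as [M HM].
    exists M. intros t Ht. replace t with a by lra. exact HM. }
  destruct (completeness E) as [s [Hub Hlub]].
  { exists b. intros x [Hx _]. lra. }
  { exists a. exact Ea. }
  assert (Has : a <= s) by (apply Hub, Ea).
  assert (Hsb : s <= b) by (apply Hlub; intros x [Hx _]; lra).
  destruct (Hpt s (conj Has Hsb) (eps / 2)) as [M0 HM0]; [lra |].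
  destruct (continuity_pt_eps_delta _ s (Hc M0 s) (eps / 2)) as [d [Hd Hdy]]; [lra |].
  assert (Hx : exists x, E x /\ s - d < x).
  { apply Classical_Prop.NNPP. intros Hn. assert (s <= s - d); [| lra].
    apply Hlub. intros x Ex. apply Rnot_lt_le. intros Hlt. apply Hn. exists x. auto. }
  destruct Hx as [x [[Hx1 [M1 HM1]] Hxs]].
  set (z := Rmin b (s + d / 2)).
  assert (Hz : z <= s + d / 2 /\ z <= b) by (split; [apply Rmin_r | apply Rmin_l]).
  assert (Ez : E z).
  { split; [unfold z; apply Rmin_case_strong; intros; lra |].
    exists (Nat.max M0 M1). intros t Ht.
    destruct (Rle_dec t x).
    - apply Rle_lt_trans with (f M1 t); [apply Hmon; [lia | lra] | apply HM1; lra].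
    - apply Rle_lt_trans with (f M0 t); [apply Hmon; [lia | lra] |].
      assert (Hts : Rabs (t - s) < d) by (apply Rabs_def1; lra).
      specialize (Hdy t Hts). rewrite !clamp_id in Hdy by lra.
      apply Rabs_def2 in Hdy. lra. }
  destruct (Req_dec s b) as [Hs | Hs].
  - destruct Ez as [_ [M HM]]. exists M. intros t Ht. apply HM.
    unfold z. rewrite Rmin_left by lra. lra.
  - exfalso. assert (Hzs : z <= s) by (apply Hub, Ez).
    revert Hzs. unfold z. apply Rmin_case_strong; intros; lra.
Qed.

Lemma psum_continuity_pt (f : nat -> R -> R) M x :
  (forall n, (n < M)%nat -> continuity_pt (f n) x) ->
  continuity_pt (fun s => psum (fun n => f n s) M) x.
Proof.
  induction M as [|M IH]; intros Hf; simpl.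
  - apply continuity_pt_const. intros ? ?. reflexivity.
  - apply (Continuity.continuity_pt_ext (plus_fct (fun s => psum (fun n => f n s) M) (f M)));
      [reflexivity |].
    apply continuity_pt_plus; [apply IH; intros; apply Hf |  apply Hf]; lia.
Qed.

Lemma psum_derivable_pt_lim (f : nat -> R -> R) (df : nat -> R) M t :
  (forall n, (n < M)%nat -> derivable_pt_lim (f n) t (df n)) ->
  derivable_pt_lim (fun s => psum (fun n => f n s) M) t (psum df M).
Proof.
  induction M as [|M IH]; intros Hf; simpl.
  - apply (derivable_pt_lim_ext (fct_cte 0)); [reflexivity | apply derivable_pt_lim_const].
  - apply (derivable_pt_lim_ext (plus_fct (fun s => psum (fun n => f n s) M) (f M)));
      [reflexivity |].
    apply derivable_pt_lim_plus; [apply IH; intros; apply Hf | apply Hf]; lia.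
Qed.

Lemma Rle_of_le_plus_scaled_eps x y K : 0 <= K ->
  (forall eps, 0 < eps -> x <= y + K * eps) -> x <= y.
Proof.
  intros HK Hxy. apply Rle_plus_epsilon. intros eps Heps.
  assert (Hq : 0 < eps / (K + 1)) by (apply Rdiv_lt_0_compat; lra).
  specialize (Hxy _ Hq).
  assert (K * (eps / (K + 1)) <= eps).
  { unfold Rdiv. rewrite <- Rmult_assoc, (Rmult_comm K), Rmult_assoc.
    rewrite <- (Rmult_1_r eps) at 2. apply Rmult_le_compat_l; [lra |].
    apply Rmult_le_reg_r with (K + 1); [lra |].
    rewrite Rmult_assoc, Rinv_l by lra. lra. }
  lra.
Qed.

Definition mode_weight (N n : nat) : R := if (n <? N)%nat then 2 else -1.

Definition lyapunov (lam : nat -> R) (N : nat) (w : nat -> R) (M : nat) : R :=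
  psum (fun n => mode_weight N n * (w n ^ 2 / lam n)) M.

Definition lyapunov_deriv (lam : nat -> R) (N : nat) (w g : nat -> R) (M : nat) : R :=
  psum (fun n => mode_weight N n * (2 * w n * (- lam n ^ 2 * w n - lam n * g n) / lam n)) M.

(* [4 Lam^2 + mu Lam] controls the modes below [N] and [mu^2 / 8], with [mu = 2 + 2 L^2],
   the modes above [N] (completing the square in [lam_n]). *)
Definition lyapunov_rate (Lam L : R) : R :=
  4 * Lam ^ 2 + (2 + 2 * L ^ 2) * Lam + (2 + 2 * L ^ 2) ^ 2 / 8.

Lemma lyapunov_rate_pos Lam L : 0 <= Lam -> 0 < lyapunov_rate Lam L.
Proof. intros HLam. unfold lyapunov_rate. pose proof (pow2_ge_0 L). nra. Qed.

Lemma lyapunov_split lam N w M : (N <= M)%nat ->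
  lyapunov lam N w M = 2 * hm1_low lam N w - hm1_high lam N w M.
Proof.
  intros HM. unfold lyapunov, hm1_low, hm1_high.
  rewrite <- (psum_indicator _ N M HM).
  rewrite (psum_ext _ (fun n => 2 * (if (n <? N)%nat then w n ^ 2 / lam n else 0)
                                + -1 * (if (n <? N)%nat then 0 else w n ^ 2 / lam n))).
  - rewrite psum_plus, !psum_scal. ring.
  - intros n _. unfold mode_weight. destruct (n <? N)%nat; ring.
Qed.

Lemma low_mode_term l Lam L w g : 0 < l <= Lam ->
  - (4 * Lam ^ 2 + (2 + 2 * L ^ 2) * Lam) * (w ^ 2 / l) + 2 * L ^ 2 * w ^ 2 - 2 * g ^ 2
  <= 2 * (2 * w * (- l ^ 2 * w - l * g) / l).
Proof.
  intros Hl.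
  set (q := w ^ 2 / l).
  assert (Hq : 0 <= q) by (apply sq_div_nonneg; lra).
  assert (Hw : w ^ 2 = l * q) by (unfold q; field; lra).
  replace (2 * (2 * w * (- l ^ 2 * w - l * g) / l)) with (- 4 * l * w ^ 2 - 4 * w * g) by (field; lra).
  rewrite Hw.
  assert (Hwg : - 2 * (l * q) - 2 * g ^ 2 <= - 4 * w * g)
    by (rewrite <- Hw; pose proof (pow2_ge_0 (w - g)); nra).
  assert ((4 * l ^ 2 + (2 + 2 * L ^ 2) * l) * q <= (4 * Lam ^ 2 + (2 + 2 * L ^ 2) * Lam) * q).
  { apply Rmult_le_compat_r; [exact Hq |]. pose proof (pow2_ge_0 L). nra. }
  nra.
Qed.

Lemma high_mode_term l L w g : 0 < l ->
  - ((2 + 2 * L ^ 2) ^ 2 / 8) * (w ^ 2 / l) + 2 * L ^ 2 * w ^ 2 - 2 * g ^ 2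
  <= -1 * (2 * w * (- l ^ 2 * w - l * g) / l).
Proof.
  intros Hl.
  set (q := w ^ 2 / l).
  assert (Hq : 0 <= q) by (apply sq_div_nonneg; lra).
  assert (Hw : w ^ 2 = l * q) by (unfold q; field; lra).
  replace (-1 * (2 * w * (- l ^ 2 * w - l * g) / l)) with (2 * l * w ^ 2 + 2 * w * g) by (field; lra).
  rewrite Hw.
  assert (Hwg : - (l * q) - g ^ 2 <= 2 * w * g)
    by (rewrite <- Hw; pose proof (pow2_ge_0 (w + g)); nra).
  assert (Hsq : 0 <= q * (2 * (l - (2 + 2 * L ^ 2) / 4) ^ 2))
    by (apply Rmult_le_pos; [exact Hq | pose proof (pow2_ge_0 (l - (2 + 2 * L ^ 2) / 4)); lra]).
  nra.
Qed.

Lemma lyapunov_deriv_lower lam N w g M Lam L E : (N <= M)%nat ->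
  (forall n, 0 < lam n) -> 0 <= Lam -> (forall n, (n < N)%nat -> lam n <= Lam) ->
  psum (fun n => g n ^ 2) M <= L ^ 2 * E ->
  hm1_high lam N w M <= hm1_low lam N w ->
  - lyapunov_rate Lam L * lyapunov lam N w M - 2 * L ^ 2 * (E - psum (fun n => w n ^ 2) M)
  <= lyapunov_deriv lam N w g M.
Proof.
  intros HM Hl HLam HlN HG Hcone.
  set (a := 4 * Lam ^ 2 + (2 + 2 * L ^ 2) * Lam).
  set (b := (2 + 2 * L ^ 2) ^ 2 / 8).
  assert (Hsum : psum (fun n => - a * (if (n <? N)%nat then w n ^ 2 / lam n else 0)
        + - b * (if (n <? N)%nat then 0 else w n ^ 2 / lam n)
        + (2 * L ^ 2 * w n ^ 2 + -2 * g n ^ 2)) M <= lyapunov_deriv lam N w g M).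
  { apply psum_le. intros n _. unfold mode_weight. cbv beta.
    destruct (Nat.ltb_spec n N) as [Hn | Hn].
    - pose proof (low_mode_term (lam n) Lam L (w n) (g n) (conj (Hl n) (HlN n Hn))) as Hlow.
      fold a in Hlow. lra.
    - pose proof (high_mode_term (lam n) L (w n) (g n) (Hl n)) as Hhigh.
      fold b in Hhigh. lra. }
  rewrite !psum_plus, !psum_scal, psum_indicator in Hsum by exact HM.
  rewrite lyapunov_split by exact HM. unfold lyapunov_rate. fold a b.
  unfold hm1_low, hm1_high in *.
  assert (Ha : 0 <= a) by (unfold a; pose proof (pow2_ge_0 L); nra).
  assert (Hb : 0 <= b) by (unfold b; pose proof (pow2_ge_0 (2 + 2 * L ^ 2)); lra).
  pose proof (pow2_ge_0 L).
  nra.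
Qed.

Lemma lyapunov_bounds lam N w M : (N <= M)%nat -> (forall n, 0 < lam n) ->
  hm1_high lam N w M <= hm1_low lam N w ->
  hm1_low lam N w <= lyapunov lam N w M <= 2 * hm1_low lam N w.
Proof.
  intros HM Hl Hcone. rewrite lyapunov_split by exact HM.
  pose proof (hm1_high_nonneg lam N w M Hl). lra.
Qed.

Section GalerkinEstimate.
Variables (lam : nat -> R) (N : nat) (Lam L a b : R).
Variables (c g : nat -> R -> R) (E : R -> R).
Hypothesis Hab : a < b.
Hypothesis Hlam : forall n, 0 < lam n.
Hypothesis HLam : 0 <= Lam.
Hypothesis HlamN : forall n, (n < N)%nat -> lam n <= Lam.
Hypothesis Hc_cont : forall n x, continuity_pt (fun s => c n (clamp a b s)) x.
Hypothesis Hc_deriv : forall n t, a < t < b ->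
  derivable_pt_lim (c n) t (- lam n ^ 2 * c n t - lam n * g n t).
Hypothesis HE_cont : forall x, continuity_pt (fun s => E (clamp a b s)) x.
Hypothesis HE_parseval : forall t, a <= t <= b -> infinite_sum (fun n => c n t ^ 2) (E t).
Hypothesis Hg_energy : forall t M, a <= t <= b -> psum (fun n => g n t ^ 2) M <= L ^ 2 * E t.
Hypothesis Hcone : forall t M, a <= t <= b ->
  hm1_high lam N (fun n => c n t) M <= hm1_low lam N (fun n => c n t).

Lemma continuity_pt_scaled_square (f : R -> R) k x : continuity_pt f x ->
  continuity_pt (fun s => k * f s ^ 2) x.
Proof.
  intros Hf. apply (Continuity.continuity_pt_ext (mult_real_fct k (mult_fct f f))).
  - intros s. unfold mult_real_fct, mult_fct. ring.
  - apply continuity_pt_scal, continuity_pt_mult; exact Hf.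
Qed.

Lemma parseval_tail_uniform eps : 0 < eps ->
  exists M, forall t, a <= t <= b -> E t - psum (fun n => c n t ^ 2) M < eps.
Proof.
  apply (dini (fun M t => E t - psum (fun n => c n t ^ 2) M)); [lra | | |].
  - intros M M' t HMM' _.
    pose proof (psum_mono (fun n => c n t ^ 2) M M' (fun n => pow2_ge_0 _) HMM'). lra.
  - intros t Ht eps' Heps'. destruct (HE_parseval t Ht eps' Heps') as [M HM].
    exists (S M). specialize (HM M (le_n _)). rewrite sum_f_R0_psum in HM.
    unfold Rdist in HM. apply Rabs_def2 in HM. lra.
  - intros M x. apply continuity_pt_minus; [apply HE_cont |].
    apply (psum_continuity_pt (fun n s => c n (clamp a b s) ^ 2)). intros n _.
    apply (Continuity.continuity_pt_ext (fun s => 1 * c n (clamp a b s) ^ 2));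
      [intros; ring | apply continuity_pt_scaled_square, Hc_cont].
Qed.

Lemma lyapunov_continuity_pt M x :
  continuity_pt (fun s => lyapunov lam N (fun n => c n (clamp a b s)) M) x.
Proof.
  apply (psum_continuity_pt (fun n s => mode_weight N n * (c n (clamp a b s) ^ 2 / lam n))).
  intros n _.
  apply (Continuity.continuity_pt_ext (fun s => mode_weight N n / lam n * c n (clamp a b s) ^ 2)).
  - intros s. pose proof (Hlam n). field. lra.
  - apply continuity_pt_scaled_square, Hc_cont.
Qed.

Lemma lyapunov_derivable_pt_lim M t : a < t < b ->
  derivable_pt_lim (fun s => lyapunov lam N (fun n => c n s) M) t
    (lyapunov_deriv lam N (fun n => c n t) (fun n => g n t) M).
Proof.
  intros Ht.
  apply (psum_derivable_pt_lim (fun n s => mode_weight N n * (c n s ^ 2 / lam n))).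
  intros n _. pose proof (Hlam n) as Hn.
  apply (derivable_pt_lim_ext (mult_real_fct (mode_weight N n / lam n) (mult_fct (c n) (c n)))).
  { intros s. unfold mult_real_fct, mult_fct. field. lra. }
  set (d := - lam n ^ 2 * c n t - lam n * g n t).
  replace (mode_weight N n * (2 * c n t * d / lam n))
    with (mode_weight N n / lam n * (d * c n t + c n t * d)) by (field; lra).
  apply derivable_pt_lim_scal, derivable_pt_lim_mult; apply Hc_deriv, Ht.
Qed.

Lemma lyapunov_backward_bound eps : 0 < eps ->
  hm1_low lam N (fun n => c n a)
  <= 2 * exp (lyapunov_rate Lam L * (b - a)) * hm1_low lam N (fun n => c n b)
     + exp (lyapunov_rate Lam L * (b - a)) * (2 * L ^ 2 * (b - a)) * eps.
Proof.
  intros Heps. destruct (parseval_tail_uniform eps Heps) as [M0 HM0].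
  set (M := Nat.max M0 N).
  assert (HNM : (N <= M)%nat) by apply Nat.le_max_r.
  assert (Htail : forall t, a <= t <= b -> E t - psum (fun n => c n t ^ 2) M <= eps).
  { intros t Ht. specialize (HM0 t Ht).
    pose proof (psum_mono (fun n => c n t ^ 2) M0 M (fun n => pow2_ge_0 _) (Nat.le_max_l _ _)).
    lra. }
  assert (HL2 : 0 <= L ^ 2) by apply pow2_ge_0.
  pose proof (backward_gronwall a b (fun s => lyapunov lam N (fun n => c n s) M)
    (fun t => lyapunov_deriv lam N (fun n => c n t) (fun n => g n t) M)
    (lyapunov_rate Lam L) (2 * L ^ 2 * eps) Hab
    (Rlt_le _ _ (lyapunov_rate_pos Lam L HLam)) ltac:(nra)
    (lyapunov_continuity_pt M) (lyapunov_derivable_pt_lim M)) as Hgron.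
  assert (Hineq : forall t, a <= t <= b ->
    - lyapunov_rate Lam L * lyapunov lam N (fun n => c n t) M - 2 * L ^ 2 * eps
    <= lyapunov_deriv lam N (fun n => c n t) (fun n => g n t) M).
  { intros t Ht.
    pose proof (lyapunov_deriv_lower lam N (fun n => c n t) (fun n => g n t) M Lam L (E t)
      HNM Hlam HLam HlamN (Hg_energy t M Ht) (Hcone t M Ht)).
    pose proof (Htail t Ht). nra. }
  specialize (Hgron Hineq).
  pose proof (lyapunov_bounds lam N (fun n => c n a) M HNM Hlam (Hcone a M (conj (Rle_refl a) (Rlt_le _ _ Hab)))).
  pose proof (lyapunov_bounds lam N (fun n => c n b) M HNM Hlam (Hcone b M (conj (Rlt_le _ _ Hab) (Rle_refl b)))).
  pose proof (exp_pos (lyapunov_rate Lam L * (b - a))). nra.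
Qed.

Lemma hm1_low_backward_estimate :
  hm1_low lam N (fun n => c n a)
  <= 2 * exp (lyapunov_rate Lam L * (b - a)) * hm1_low lam N (fun n => c n b).
Proof.
  apply (Rle_of_le_plus_scaled_eps _ _ (exp (lyapunov_rate Lam L * (b - a)) * (2 * L ^ 2 * (b - a)))).
  - pose proof (exp_pos (lyapunov_rate Lam L * (b - a))). pose proof (pow2_ge_0 L).
    apply Rmult_le_pos; nra.
  - exact lyapunov_backward_bound.
Qed.

End GalerkinEstimate.

Definition hcont_on {H : HSpace} (a b : R) (u : R -> H) : Prop :=
  forall t, a <= t <= b -> forall eps, eps > 0 -> exists delta, delta > 0 /\
    forall s, a <= s <= b -> Rabs (s - t) < delta -> hnorm (hsub (u s) (u t)) < eps.

Section ContinuousPaths.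
Context {H : HSpace}.

Lemma hcont_on_const a b (v : H) : hcont_on a b (fun _ => v).
Proof.
  intros t _ eps Heps. exists 1. split; [lra |]. intros s _ _.
  unfold hnorm. rewrite hip_sub_l, !hip_sub_r. replace (_ - _ - _) with 0 by ring.
  rewrite sqrt_0. lra.
Qed.

Lemma hnorm_hsub_swap (x y x' y' : H) :
  hnorm (hsub (hsub x y) (hsub x' y')) = hnorm (hsub (hsub x x') (hsub y y')).
Proof.
  unfold hnorm. f_equal. rewrite !hip_sub_l, !hip_sub_r.
  rewrite (hip_sym _ y x), (hip_sym _ x' x), (hip_sym _ y' x), (hip_sym _ x' y),
    (hip_sym _ y' y), (hip_sym _ y' x').
  ring.
Qed.

Lemma hcont_on_hsub a b (u v : R -> H) : hcont_on a b u -> hcont_on a b v ->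
  hcont_on a b (fun s => hsub (u s) (v s)).
Proof.
  intros Hu Hv t Ht eps Heps.
  destruct (Hu t Ht (eps / 2)) as [d1 [Hd1 H1]]; [lra |].
  destruct (Hv t Ht (eps / 2)) as [d2 [Hd2 H2]]; [lra |].
  exists (Rmin d1 d2). split; [apply Rmin_pos; assumption |]. intros s Hs Hst.
  specialize (H1 s Hs (Rlt_le_trans _ _ _ Hst (Rmin_l _ _))).
  specialize (H2 s Hs (Rlt_le_trans _ _ _ Hst (Rmin_r _ _))).
  rewrite hnorm_hsub_swap.
  pose proof (hnorm_hsub_le (hsub (u s) (u t)) (hsub (v s) (v t))). lra.
Qed.

Lemma Rabs_hip_sub_le (x y x' y' : H) :
  Rabs (hip x y - hip x' y')
  <= hnorm (hsub x x') * hnorm (hsub y y') + hnorm (hsub x x') * hnorm y'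
     + hnorm x' * hnorm (hsub y y').
Proof.
  replace (hip x y - hip x' y') with
    (hip (hsub x x') (hsub y y') + hip (hsub x x') y' + hip x' (hsub y y'))
    by (rewrite !hip_sub_l, !hip_sub_r; ring).
  pose proof (Rabs_hip_le (hsub x x') (hsub y y')).
  pose proof (Rabs_hip_le (hsub x x') y'). pose proof (Rabs_hip_le x' (hsub y y')).
  pose proof (Rabs_triang (hip (hsub x x') (hsub y y') + hip (hsub x x') y') (hip x' (hsub y y'))).
  pose proof (Rabs_triang (hip (hsub x x') (hsub y y')) (hip (hsub x x') y')).
  lra.
Qed.

Lemma hip_continuity_pt a b (u v : R -> H) x : a <= b -> hcont_on a b u -> hcont_on a b v ->
  continuity_pt (fun s => hip (u (clamp a b s)) (v (clamp a b s))) x.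
Proof.
  intros Hab Hu Hv. apply continuity_pt_of_eps_delta. intros eps Heps.
  set (t := clamp a b x). assert (Ht : a <= t <= b) by (apply clamp_in, Hab).
  set (K := 1 + hnorm (u t) + hnorm (v t)).
  pose proof (hnorm_nonneg (u t)). pose proof (hnorm_nonneg (v t)).
  (* with [|u s - u t|, |v s - v t| <= eta <= 1], the bound of [Rabs_hip_sub_le] is [<= eta K] *)
  set (eta := Rmin 1 (eps / (2 * K))).
  assert (Heta : 0 < eta) by (apply Rmin_pos; [lra | apply Rdiv_lt_0_compat; unfold K; lra]).
  assert (HetaK : eta * K <= eps / 2).
  { apply Rle_trans with (eps / (2 * K) * K); [apply Rmult_le_compat_r; [unfold K; lra | apply Rmin_r] |].
    right. field. unfold K. lra. }
  destruct (Hu t Ht eta Heta) as [d1 [Hd1 Hus]].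
  destruct (Hv t Ht eta Heta) as [d2 [Hd2 Hvs]].
  exists (Rmin d1 d2). split; [apply Rmin_pos; assumption |]. intros y Hy.
  set (s := clamp a b y). assert (Hs : a <= s <= b) by (apply clamp_in, Hab).
  assert (Hst : Rabs (s - t) < Rmin d1 d2)
    by (eapply Rle_lt_trans; [apply clamp_lipschitz, Hab | exact Hy]).
  specialize (Hus s Hs (Rlt_le_trans _ _ _ Hst (Rmin_l _ _))).
  specialize (Hvs s Hs (Rlt_le_trans _ _ _ Hst (Rmin_r _ _))).
  pose proof (Rabs_hip_sub_le (u s) (v s) (u t) (v t)).
  pose proof (hnorm_nonneg (hsub (u s) (u t))). pose proof (hnorm_nonneg (hsub (v s) (v t))).
  assert (eta <= 1) by apply Rmin_l.
  unfold K in HetaK. fold s t. nra.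
Qed.

End ContinuousPaths.

Lemma solution_coord_diff_derivable {H : HSpace} (e : nat -> H) lam F T (u1 u2 : R -> H) n t :
  is_solution e lam F T u1 -> is_solution e lam F T u2 -> -T < t < 0 ->
  derivable_pt_lim (fun s => hip (hsub (u1 s) (u2 s)) (e n)) t
    (- lam n ^ 2 * hip (hsub (u1 t) (u2 t)) (e n)
     - lam n * hip (hsub (F (u1 t)) (F (u2 t))) (e n)).
Proof.
  intros [_ Hd1] [_ Hd2] Ht.
  apply (derivable_pt_lim_ext (minus_fct (fun s => hip (u1 s) (e n)) (fun s => hip (u2 s) (e n)))).
  { intros s. symmetry. apply hip_sub_l. }
  rewrite !hip_sub_l.
  replace (- lam n ^ 2 * (hip (u1 t) (e n) - hip (u2 t) (e n))
           - lam n * (hip (F (u1 t)) (e n) - hip (F (u2 t)) (e n)))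
    with ((- lam n ^ 2 * hip (u1 t) (e n) - lam n * hip (F (u1 t)) (e n))
          - (- lam n ^ 2 * hip (u2 t) (e n) - lam n * hip (F (u2 t)) (e n))) by ring.
  apply derivable_pt_lim_minus; [apply Hd1 | apply Hd2]; exact Ht.
Qed.

Lemma lipschitz_bessel {H : HSpace} (e : nat -> H) (F : H -> H) L x y M :
  orthonormal_basis e -> 0 <= L -> lipschitz_with F L ->
  psum (fun n => hip (hsub (F x) (F y)) (e n) ^ 2) M <= L ^ 2 * hip (hsub x y) (hsub x y).
Proof.
  intros Ho HL HF. eapply Rle_trans; [apply bessel, Ho |].
  rewrite <- !hnorm_sq.
  pose proof (HF x y). pose proof (hnorm_nonneg (hsub (F x) (F y))).
  pose proof (hnorm_nonneg (hsub x y)). nra.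
Qed.

Theorem lemma2p1 :
  forall (H : HSpace) (e : nat -> H) (lam : nat -> R) (L : R) (N : nat),
    orthonormal_basis e -> eigenvalue_seq lam -> 0 <= L ->
    exists C alpha : R, 0 < C /\ 0 < alpha /\
      forall (F : H -> H), globally_bounded F -> lipschitz_with F L ->
      forall (T : R) (u1 u2 : R -> H), 0 < T ->
        is_solution e lam F T u1 -> is_solution e lam F T u2 ->
        (forall t, -T <= t <= 0 -> in_Kplus e lam N (hsub (u1 t) (u2 t))) ->
        hm1sq e lam (hsub (u1 (-T)) (u2 (-T)))
          <= C * exp (alpha * T) * hm1sq e lam (hsub (PN e N (u1 0)) (PN e N (u2 0))).
Proof.
  intros H e lam L N Ho Hl HL.
  pose proof (lam_pos lam Hl) as Hlam.
  exists 4, (lyapunov_rate (lam N) L).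
  split; [lra | split; [apply lyapunov_rate_pos, Rlt_le, Hlam |]].
  intros F _ HF T u1 u2 HT Hu1 Hu2 HK.
  set (W := fun t => hsub (u1 t) (u2 t)).
  assert (HW : hcont_on (-T) 0 W) by (apply hcont_on_hsub; [exact (proj1 Hu1) | exact (proj1 Hu2)]).
  assert (Hest : hm1_low lam N (fun n => hip (W (-T)) (e n))
    <= 2 * exp (lyapunov_rate (lam N) L * (0 - - T)) * hm1_low lam N (fun n => hip (W 0) (e n))).
  { apply (hm1_low_backward_estimate lam N (lam N) L (-T) 0 (fun n t => hip (W t) (e n))
      (fun n t => hip (hsub (F (u1 t)) (F (u2 t))) (e n)) (fun t => hip (W t) (W t))).
    - lra.
    - exact Hlam.
    - apply Rlt_le, Hlam.
    - intros n Hn. apply lam_le_of_le; [exact Hl | lia].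
    - intros n x. exact (hip_continuity_pt (-T) 0 W (fun _ => e n) x ltac:(lra) HW (hcont_on_const _ _ _)).
    - intros n t Ht. apply (solution_coord_diff_derivable e lam F T); assumption.
    - intros x. exact (hip_continuity_pt (-T) 0 W W x ltac:(lra) HW HW).
    - intros t _. apply Ho.
    - intros t M _. apply lipschitz_bessel; assumption.
    - intros t M Ht. apply in_Kplus_high_le_low, HK, Ht; assumption. }
  replace (0 - - T) with T in Hest by ring.
  pose proof (hm1sq_le_of_in_Kplus e lam Ho Hl N (W (-T)) (HK (-T) ltac:(lra))).
  rewrite (hm1sq_sub_PN e lam Ho Hl). unfold W in *. lra.
Qed.
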